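(* Let $\mathcal{S}$ be a finite set of states and, for each $s\in\mathcal{S}$, let $\mathcal{A}(s)$ be a finite nonempty set of actions. For logits $\theta=(\theta_{s,a})$ let $\pi_\theta(a\mid s)=\exp(\theta_{s,a})/\sum_{a'\in\mathcal{A}(s)}\exp(\theta_{s,a'})$. Fix old logits $\theta_{\mathrm{old}}$, current logits $\theta^k$, an advantage function $A:\{(s,a)\}\to\mathbb{R}$, weights $d(s)\ge 0$ (the state visitation distribution of $\pi_{\theta_{\mathrm{old}}}$), a learning rate $\eta>0$, $\epsilon\in(0,1)$ and $\delta>0$. Write $w_{s,a}(\theta)=\pi_\theta(a\mid s)/\pi_{\theta_{\mathrm{old}}}(a\mid s)$, and for $l<u$ let $$J^{l,u}(\theta)=\sum_{s\in\mathcal{S}} d(s)\sum_{a\in\mathcal{A}(s)}\pi_{\theta_{\mathrm{old}}}(a\mid s)\,\mathrm{clip}\big(w_{s,a}(\theta),l,u\big)\,A(s,a),$$ where $\mathrm{clip}(w,l,u)=\min(\max(w,l),u)$. Let $0<l_\delta<1<u_\delta$ be the two solutions of $w-1-\log w=\delta$. Define the one-step updates $$\theta^{\mathrm{ratio},k+1}=\theta^k+\eta\,\nabla_\theta J^{1-\epsilon,1+\epsilon}(\theta^k),\qquad \theta^{\mathrm{ATR},k+1}=\theta^k+\eta\,\nabla_\theta J^{l_\delta,u_\delta}(\theta^k),$$ and $\Delta\theta_{s,a}=\theta^{\mathrm{ATR},k+1}_{s,a}-\theta^{\mathrm{ratio},k+1}_{s,a}$. Assume that no ratio $w_{s,a}(\theta^k)$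 equals any of $1-\epsilon,\,1+\epsilon,\,l_\delta,\,u_\delta$. Fix $s\in\mathcal{S}$. (a) If $1+\epsilon=u_\delta$, let $X_-(s)=\{a\in\mathcal{A}(s): w_{s,a}(\theta^k)\in[1-\epsilon,\,l_\delta]\}$ with indicator $\mathbb{I}_{X_-(s)}$. Then for every $a\in\mathcal{A}(s)$, $$\Delta\theta_{s,a}=-\eta\, d(s)\,\pi_{\theta^k}(a\mid s)\Big[A(s,a)\mathbb{I}_{X_-(s)}(a)-\mathbb{E}_{a'\sim\pi_{\theta^k}(\cdot\mid s)}\big[A(s,a')\mathbb{I}_{X_-(s)}(a')\big]\Big].$$ (b) If $1-\epsilon=l_\delta$, let $X_+(s)=\{a\in\mathcal{A}(s): w_{s,a}(\theta^k)\in[1+\epsilon,\,u_\delta]\}$ with indicator $\mathbb{I}_{X_+(s)}$. Then for every $a\in\mathcal{A}(s)$, $$\Delta\theta_{s,a}=\eta\, d(s)\,\pi_{\theta^k}(a\mid s)\Big[A(s,a)\mathbb{I}_{X_+(s)}(a)-\mathbb{E}_{a'\sim\pi_{\theta^k}(\cdot\mid s)}\big[A(s,a')\mathbb{I}_{X_+(s)}(a')\big]\Big].$$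
   Context: This compares one full-batch policy-gradient step with a softmax (tabular) policy under symmetric ratio-based clipping of the likelihood ratio to $[1-\epsilon,1+\epsilon]$ (''ratio-based clipping'') versus clipping to $[l_\delta,u_\delta]$, the interval on which the KL3 estimator $w-1-\log w$ is at most $\delta$ (''ATR-based clipping''). *)

From HB Require Import structures.
From mathcomp Require Import all_boot all_order all_algebra.
From mathcomp Require Import all_classical all_reals all_analysis.
Set Implicit Arguments. Unset Strict Implicit. Unset Printing Implicit Defensive.
Import Order.TTheory GRing.Theory Num.Theory.
Local Open Scope ring_scope.

(* Logits th : S -> Act -> R
   (only the values on pairs (s,a) with a \in Aset s matter). *)

Section Defs.
Variables (R : realType) (S Act : finType) (Aset : S -> {set Act}).

Definition softpol (th : S -> Act -> R) (s : S) (a : Act) : R :=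
  expR (th s a) / \sum_(a' in Aset s) expR (th s a').

Definition lik_ratio (thold th : S -> Act -> R) (s : S) (a : Act) : R :=
  softpol th s a / softpol thold s a.

Definition clipR (w l u : R) : R := Num.min (Num.max w l) u.

Definition Jclip (d : S -> R) (Adv : S -> Act -> R) (thold : S -> Act -> R)
    (l u : R) (th : S -> Act -> R) : R :=
  \sum_(s : S) d s * \sum_(a in Aset s)
     softpol thold s a * clipR (lik_ratio thold th s a) l u * Adv s a.

Definition perturb (th : S -> Act -> R) (s : S) (a : Act) (t : R) : S -> Act -> R :=
  fun s' a' => th s' a' + (if (s' == s) && (a' == a) then t else 0).

Definition partialJ d Adv thold l u th s a : R :=
  derive1 (fun t : R => Jclip d Adv thold l u (perturb th s a t)) 0.

Definition update d Adv thold (eta l u : R) th s a : R :=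
  th s a + eta * partialJ d Adv thold l u th s a.

End Defs.

From HB Require Import structures.
From mathcomp Require Import all_boot all_order all_algebra.
From mathcomp Require Import all_classical all_reals all_analysis.
From mathcomp Require Import ring lra.
Import Order.TTheory GRing.Theory Num.Theory.
Import numFieldNormedType.Exports.
Local Open Scope ring_scope.

Set Implicit Arguments.
Unset Strict Implicit.
Unset Printing Implicit Defensive.

(* The partial derivative of J^{l,u} in theta_{s,a} is
   d(s) sum_b pi(b|s) ([b = a] - pi(a|s)) A(s,b) [l < w_{s,b} < u]:
   clipping is locally constant outside ]l, u[ and the identity inside (no
   ratio sits on a boundary), and dw_{s,b}/dtheta_{s,a} = w_{s,b} ([b = a] - pi(a|s)).
   Hence Delta only sees the ratios lying in exactly one of the two windows.
   Since log((1+e)/(1-e)) > 2e, the KL3 function k(w) = w - 1 - log w satisfies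
   k(1+e) < k(1-e); as k decreases on ]0,1] and increases on [1,+oo[, u_delta = 1+e
   forces l_delta > 1-e, and l_delta = 1-e forces u_delta > 1+e. So the windows
   differ exactly on [1-e, l_delta], resp. [1+e, u_delta], and the softmax Jacobian
   identity sum_b pi_b ([b = a] - pi_a) f_b = pi_a (f_a - E_pi f) gives the
   stated form. *)

Section RealDerivatives.
Variable R : realType.

Lemma is_derive_bigsum (I : finType) (P : pred I) (h : I -> R -> R) (dh : I -> R) (x : R) :
  (forall i, P i -> is_derive x 1 (h i) (dh i)) ->
  is_derive x 1 (fun t => \sum_(i | P i) h i t) (\sum_(i | P i) dh i).
Proof.
move=> hd; rewrite -(fct_sumE (index_enum I) P h).
elim/big_rec2: _ => [|i y f Pi IH]; first exact: is_derive_cst.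
exact: is_deriveD (hd i Pi) IH.
Qed.

Lemma is_deriveMr (f : R -> R) (x c df : R) :
  is_derive x 1 f df -> is_derive x 1 (fun t => f t * c) (df * c).
Proof.
move=> fd; eapply is_derive_eq; first by eapply is_deriveM; [exact: fd | exact: is_derive_cst].
by rewrite scaler0 add0r mulrC.
Qed.

Lemma is_derive_affine (x k c : R) : is_derive x 1 (fun t => k + c * t) c.
Proof.
rewrite -[X in is_derive _ _ _ X]add0r -[X in is_derive _ _ _ (_ + X)]mulr1.
by apply: is_deriveD.
Qed.

Lemma is_derive_ln_comp (f : R -> R) (x df : R) : 0 < f x ->
  is_derive x 1 f df -> is_derive x 1 (fun y => ln (f y)) (df / f x).
Proof.
move=> fx0 fd; rewrite mulrC.
by have := is_derive1_comp (is_derive1_ln fx0) fd.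
Qed.

Lemma clipR_near (l u y : R) : l < u -> y != l -> y != u ->
  \forall z \near y, clipR z l u = if l < y < u then z else clipR y l u.
Proof.
move=> lu yl yu; rewrite /clipR.
case: (ltgtP y l) yl => [ylt|lty|]; last by [].
  move=> _; near=> z; have zl : z < l by near: z; exact: lt_nbhsl.
  by rewrite /= !max_r ?ltW.
case: (ltgtP y u) yu => [ylt|uty|]; last by [].
  move=> _ _; near=> z; have lz : l < z by near: z; exact: lt_nbhsr.
  have zu : z < u by near: z; exact: lt_nbhsl.
  by rewrite /= max_l ?min_l ?ltW.
move=> _ _; near=> z; have uz : u < z by near: z; exact: lt_nbhsr.
by rewrite /= max_l ?min_r ?ltW ?(lt_trans lu).
Unshelve. all: by end_near.
Qed.

Lemma is_derive_clipR (f : R -> R) (x df l u : R) : l < u -> f x != l -> f x != u ->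
  is_derive x 1 f df ->
  is_derive x 1 (fun t => clipR (f t) l u) (if l < f x < u then df else 0).
Proof.
move=> lu fl fu fd.
have fc : {for x, continuous f}.
  by case: fd => /derivable1_diffP/differentiable_continuous.
apply: (near_eq_is_derive (f := fun t => if l < f x < u then f t else clipR (f x) l u)).
  have near_clip : \forall t \near x,
      clipR (f t) l u = if l < f x < u then f t else clipR (f x) l u.
    exact: fc _ (clipR_near lu fl fu).
  by apply: filterS near_clip => t ->.
by case: (l < f x < u) => //; exact: is_derive_cst.
Qed.

End RealDerivatives.

Section KL3.
Variable R : realType.

Definition kl3 (w : R) : R := w - 1 - ln w.

Lemma ln_le_subr1 (x : R) : 0 < x -> ln x <= x - 1.
Proof. by move=> x0; have := @le_ln1Dx R (x - 1); rewrite subrKC; apply; lra. Qed.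

Lemma kl3_subr_ge (x y : R) : 0 < x -> 0 < y ->
  (y / x - 1) * (x - 1) <= kl3 y - kl3 x.
Proof.
move=> x0 y0; have := ln_le_subr1 (divr_gt0 y0 x0); rewrite ln_div ?posrE // /kl3.
have : y / x * x = y by rewrite divfK ?gt_eqF.
nra.
Qed.

Lemma kl3_decr_le1 (x y : R) : 0 < x -> x <= y -> y <= 1 -> kl3 y <= kl3 x.
Proof.
move=> x0 xy y1; have y0 : 0 < y by lra.
have := kl3_subr_ge y0 x0; have : x / y <= 1 by rewrite ler_pdivrMr ?mul1r.
nra.
Qed.

Lemma kl3_incr_ge1 (x y : R) : 1 <= x -> x <= y -> kl3 x <= kl3 y.
Proof.
move=> x1 xy; have x0 : 0 < x by lra.
have := kl3_subr_ge x0 (lt_le_trans x0 xy); have : 1 <= y / x by rewrite ler_pdivlMr ?mul1r.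
nra.
Qed.

Lemma mul2r_lt_ln1D_sub_ln1B (e : R) : 0 < e < 1 -> 2 * e < ln (1 + e) - ln (1 - e).
Proof.
move=> /andP[e0 e1].
pose h (x : R) := ln (1 + x) - ln (1 - x) - 2 * x.
have dh (x : R) : -1 < x < 1 -> is_derive x 1 h (2 * x ^+ 2 / (1 - x ^+ 2)).
  move=> /andP[x1 x2].
  have dD : is_derive x 1 (fun y : R => 1 + y) 1.
    by rewrite -[X in is_derive _ _ _ X]add0r; apply: is_deriveD.
  have dB : is_derive x 1 (fun y : R => 1 - y) (-1).
    by rewrite -[X in is_derive _ _ _ X]sub0r; apply: is_deriveB.
  have d2 : is_derive x 1 (fun y : R => 2 * y) 2.
    by rewrite -[X in is_derive _ _ _ X]mulr1; apply: is_deriveZ.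
  apply: is_derive_eq.
    by apply: is_deriveB => //; apply: is_deriveB; apply: is_derive_ln_comp => //; lra.
  have : 1 + x != 0 by rewrite gt_eqF //; lra.
  have : 1 - x != 0 by rewrite gt_eqF //; lra.
  have : 1 - x ^+ 2 != 0 by rewrite gt_eqF //; nra.
  by move=> nz1 nz2 nz3; field; rewrite nz1 nz2 nz3.
have hc : {within `[0, 1[, continuous h}%classic.
  apply: continuous_in_subspaceT => y; rewrite inE /= in_itv /= => /andP[y0 y1].
  have /dh[dy _] : -1 < y < 1 by lra.
  exact/differentiable_continuous/derivable1_diffP.
have : h 0 < h e.
  apply: (gtr0_derive1_lt_co _ _ hc); rewrite ?in_itv /= ?lexx ?ltr01 ?(ltW e0) ?e1 //.
  - by move=> y; rewrite in_itv /= => /andP[y0 y1]; have /dh[] : -1 < y < 1 by lra.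
  - move=> y; rewrite in_itv /= => /andP[y0 y1]; rewrite derive1E.
    have /dh[_ ->] : -1 < y < 1 by lra.
    by apply: divr_gt0; nra.
by rewrite /h addr0 subr0 ln1 mulr0; lra.
Qed.

Lemma kl3_1D_lt_1B (e : R) : 0 < e < 1 -> kl3 (1 + e) < kl3 (1 - e).
Proof. move=> /mul2r_lt_ln1D_sub_ln1B; rewrite /kl3; lra. Qed.

Lemma kl3_eq_1D_gt_1B (e l : R) : 0 < e < 1 -> 0 < l ->
  kl3 l = kl3 (1 + e) -> 1 - e < l.
Proof.
move=> e01 l0 kl; rewrite ltNge; apply/negP => le.
have := kl3_1D_lt_1B e01; rewrite -kl ltNge (kl3_decr_le1 l0 le) //; lra.
Qed.

Lemma kl3_eq_1B_gt_1D (e u : R) : 0 < e < 1 -> 1 <= u ->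
  kl3 u = kl3 (1 - e) -> 1 + e < u.
Proof.
move=> e01 u1 ku; rewrite ltNge; apply/negP => ue.
have := kl3_1D_lt_1B e01; rewrite -ku ltNge (kl3_incr_ge1 u1 ue) //.
Qed.

End KL3.

Section SoftmaxDerivative.
Variables (R : realType) (S Act : finType) (Aset : S -> {set Act}).
Variable th : S -> Act -> R.

Lemma sum_expR_gt0 (A : {set Act}) (f : Act -> R) b : b \in A ->
  0 < \sum_(i in A) expR (f i).
Proof. by move=> bA; rewrite (bigD1 b) //= ltr_pwDl ?expR_gt0 // sumr_ge0. Qed.

Lemma softpol_gt0 s b : b \in Aset s -> 0 < softpol Aset th s b.
Proof. by move=> bA; rewrite divr_gt0 ?expR_gt0 ?(sum_expR_gt0 _ bA). Qed.

Lemma softpol_perturb_neq s a t s' : s' != s ->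
  softpol Aset (perturb th s a t) s' =1 softpol Aset th s'.
Proof.
move=> /negPf ns b; rewrite /softpol /perturb ns /= addr0.
by congr (_ / _); apply: eq_bigr => b' _; rewrite addr0.
Qed.

Lemma softpol_perturb s a t b : softpol Aset (perturb th s a t) s b =
  expR (th s b + (b == a)%:R * t) / \sum_(b' in Aset s) expR (th s b' + (b' == a)%:R * t).
Proof.
have E b' : (if b' == a then t else 0) = (b' == a)%:R * t.
  by case: eqP; rewrite ?mul1r ?mul0r.
rewrite /softpol /perturb eqxx /= E.
by congr (_ / _); apply: eq_bigr => b' _; rewrite E.
Qed.

Lemma is_derive_softpol_perturb s a b : a \in Aset s ->
  is_derive (0 : R) 1 (fun t => softpol Aset (perturb th s a t) s b)
    (softpol Aset th s b * ((b == a)%:R - softpol Aset th s a)).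
Proof.
move=> aA.
pose N b' t := expR (th s b' + (b' == a)%:R * t).
pose Z t := \sum_(b' in Aset s) N b' t.
have N0 b' : N b' 0 = expR (th s b') by rewrite /N mulr0 addr0.
have dN b' : is_derive (0 : R) 1 (N b') (expR (th s b') * (b' == a)%:R).
  by have := is_derive1_comp (is_derive_expR _) (is_derive_affine 0 (th s b') (b' == a)%:R);
    rewrite mulr0 addr0.
have dZ : is_derive (0 : R) 1 Z (expR (th s a)).
  apply: is_derive_eq; first exact: is_derive_bigsum => b' _.
  by rewrite (bigD1 a) //= eqxx mulr1 big1 ?addr0 // => b' /andP[_ /negPf ->]; rewrite mulr0.
have Z0 : Z 0 = \sum_(b' in Aset s) expR (th s b') by apply: eq_bigr => b' _.
have Zgt0 : 0 < Z 0 by rewrite Z0 (sum_expR_gt0 _ aA).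
rewrite (_ : (fun t => _) = fun t => N b t / Z t); last first.
  by apply/funext => t; rewrite softpol_perturb.
eapply is_derive_eq.
  by eapply is_deriveM; [exact: dN | exact: is_deriveV (lt0r_neq0 Zgt0) dZ].
rewrite /softpol -Z0 !N0 /GRing.scale /=.
by field; rewrite gt_eqF.
Qed.

End SoftmaxDerivative.

Section IndicatorAlgebra.
Variable R : realType.

Lemma indicator_ooBl (x l1 l2 u : R) : l1 <= l2 < u -> x != l1 ->
  (if l1 < x < u then 1 else 0) - (if l2 < x < u then 1 else 0)
    = (if l1 <= x <= l2 then 1 else 0) :> R.
Proof.
move=> /andP[l12 l2u] xl1.
case: (ltgtP x l1) => [h1|h1|h1]; last by rewrite h1 eqxx in xl1.
all: case: (ltgtP x l2) => h2; case: (ltgtP x u) => h3 /=; lra.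
Qed.

Lemma indicator_ooBr (x l u1 u2 : R) : l < u1 <= u2 -> x != u2 ->
  (if l < x < u2 then 1 else 0) - (if l < x < u1 then 1 else 0)
    = (if u1 <= x <= u2 then 1 else 0) :> R.
Proof.
move=> /andP[lu1 u12] xu2.
case: (ltgtP x u2) => [h2|h2|h2]; last by rewrite h2 eqxx in xu2.
all: case: (ltgtP x l) => h0; case: (ltgtP x u1) => h1 /=; lra.
Qed.

Lemma sum_softmax_jacobian (I : finType) (A : {set I}) (p f : I -> R) a : a \in A ->
  \sum_(b in A) p b * ((b == a)%:R - p a) * f b = p a * (f a - \sum_(b in A) p b * f b).
Proof.
move=> aA; rewrite mulrBr mulr_sumr.
have -> : \sum_(b in A) p b * ((b == a)%:R - p a) * f b
    = \sum_(b in A) p b * (b == a)%:R * f b - \sum_(b in A) p a * (p b * f b).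
  by rewrite -sumrB; apply: eq_bigr => b _; ring.
congr (_ - _); rewrite (bigD1 a) //= eqxx mulr1 big1 ?addr0 // => b /andP[_ /negPf ->].
by rewrite mulr0 mul0r.
Qed.

End IndicatorAlgebra.

Section ClippedObjectiveGradient.
Variables (R : realType) (S Act : finType) (Aset : S -> {set Act}).
Variables (d : S -> R) (Adv : S -> Act -> R) (thold th : S -> Act -> R).
Local Notation pi := (softpol Aset th).
Local Notation w := (lik_ratio Aset thold th).

Definition Jclip_state (l u : R) (th' : S -> Act -> R) (s : S) : R :=
  d s * \sum_(b in Aset s)
     softpol Aset thold s b * clipR (lik_ratio Aset thold th' s b) l u * Adv s b.

Definition Jclip_grad (l u : R) (s : S) (a : Act) : R :=
  d s * \sum_(b in Aset s)
     pi s b * ((b == a)%:R - pi s a) * (Adv s b * if l < w s b < u then 1 else 0).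

Lemma Jclip_state_perturb_neq l u s a t s' : s' != s ->
  Jclip_state l u (perturb th s a t) s' = Jclip_state l u th s'.
Proof.
move=> ns; congr (_ * _); apply: eq_bigr => b _.
by rewrite /lik_ratio softpol_perturb_neq.
Qed.

Lemma is_derive_Jclip_perturb l u s a : l < u -> a \in Aset s ->
  {in Aset s, forall b, w s b != l} -> {in Aset s, forall b, w s b != u} ->
  is_derive (0 : R) 1 (fun t => Jclip Aset d Adv thold l u (perturb th s a t))
    (Jclip_grad l u s a).
Proof.
move=> lu aA wl wu.
have P0 : perturb th s a 0 = th.
  by apply/funext=> s'; apply/funext=> b; rewrite /perturb if_same addr0.
change (is_derive (0 : R) 1 (fun t => \sum_(s' : S) Jclip_state l u (perturb th s a t) s')
  (Jclip_grad l u s a)).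
have -> : Jclip_grad l u s a = \sum_(s' : S) if s' == s then Jclip_grad l u s a else 0.
  by rewrite -big_mkcond big_pred1_eq.
apply: is_derive_bigsum => s' _; case: eqP => [->|/eqP ns]; last first.
  rewrite (_ : (fun t => _) = cst (Jclip_state l u th s')); first exact: is_derive_cst.
  by apply/funext => t; rewrite Jclip_state_perturb_neq.
apply: is_deriveZ; apply: is_derive_bigsum => b bA.
have dw : is_derive (0 : R) 1 (fun t => lik_ratio Aset thold (perturb th s a t) s b)
    (pi s b * ((b == a)%:R - pi s a) / softpol Aset thold s b).
  rewrite /lik_ratio.
  by have := is_deriveMr (softpol Aset thold s b)^-1 (is_derive_softpol_perturb th b aA).
have := is_derive_clipR lu _ _ dw; rewrite P0 => /(_ (wl b bA) (wu b bA)) dclip.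
have := is_deriveMr (Adv s b) (is_deriveZ (softpol Aset thold s b) dclip).
move/is_derive_eq; apply.
have := softpol_gt0 thold bA.
by case: ifP => _ pold; rewrite /GRing.scale /=; field; rewrite ?gt_eqF.
Qed.

Lemma Jclip_grad_sub l1 u1 l2 u2 s a (c : Act -> R) : a \in Aset s ->
  {in Aset s, forall b, (if l1 < w s b < u1 then 1 else 0)
                        - (if l2 < w s b < u2 then 1 else 0) = c b} ->
  Jclip_grad l1 u1 s a - Jclip_grad l2 u2 s a
    = d s * pi s a * (Adv s a * c a - \sum_(b in Aset s) pi s b * (Adv s b * c b)).
Proof.
move=> aA hc; rewrite -mulrBr -sumrB -mulrA -sum_softmax_jacobian //.
by congr (_ * _); apply: eq_bigr => b bA; rewrite -!mulrBr hc.
Qed.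

End ClippedObjectiveGradient.

Unset Implicit Arguments.

Theorem theorem3 (R : realType) (S Act : finType) (Aset : S -> {set Act})
  (thold thk : S -> Act -> R) (Adv : S -> Act -> R) (d : S -> R)
  (eta eps delta ld ud : R) :
  (forall s, (0 < #|Aset s|)%N) ->
  (forall s, 0 <= d s) ->
  0 < eta -> 0 < eps < 1 -> 0 < delta ->
  0 < ld < 1 -> 1 < ud ->
  ld - 1 - ln ld = delta -> ud - 1 - ln ud = delta ->
  (forall s a, a \in Aset s ->
     lik_ratio Aset thold thk s a \notin [:: 1 - eps; 1 + eps; ld; ud]) ->
  forall s : S,
  let w := lik_ratio Aset thold thk s in
  let Delta := fun a => update Aset d Adv thold eta ld ud thk s a
                      - update Aset d Adv thold eta (1 - eps) (1 + eps) thk s a in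
  (* gradients exist (partial derivatives along each coordinate (s,a)) *)
  (forall a, a \in Aset s ->
     derivable (fun t : R => Jclip Aset d Adv thold ld ud (perturb thk s a t)) 0 1 /\
     derivable (fun t : R => Jclip Aset d Adv thold (1 - eps) (1 + eps) (perturb thk s a t)) 0 1) /\
  (* (a) *)
  (1 + eps = ud ->
    let I := fun a : Act => if (a \in Aset s) && (1 - eps <= w a <= ld) then 1 else 0 in
    forall a, a \in Aset s ->
      Delta a = - eta * d s * softpol Aset thk s a *
        (Adv s a * I a - \sum_(a' in Aset s) softpol Aset thk s a' * (Adv s a' * I a'))) /\
  (* (b) *)
  (1 - eps = ld ->
    let I := fun a : Act => if (a \in Aset s) && (1 + eps <= w a <= ud) then 1 else 0 in
    forall a, a \in Aset s ->
      Delta a = eta * d s * softpol Aset thk s a *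
        (Adv s a * I a - \sum_(a' in Aset s) softpol Aset thk s a' * (Adv s a' * I a'))).
Proof.
move=> _ _ _ e01 _ /andP[l0 l1] u1 hl hu hnot s w Delta; have /andP[e0 e1] := e01.
have wN c : c \in [:: 1 - eps; 1 + eps; ld; ud] -> {in Aset s, forall b, w b != c}.
  by move=> hc b bA; apply: contraNneq (hnot s b bA); rewrite /w => ->.
have dATR a : a \in Aset s -> is_derive (0 : R) 1
    (fun t => Jclip Aset d Adv thold ld ud (perturb thk s a t))
    (Jclip_grad Aset d Adv thold thk ld ud s a).
  by move=> aA; apply: is_derive_Jclip_perturb => //;
    [lra | apply: wN; rewrite !inE eqxx ?orbT..].
have dRatio a : a \in Aset s -> is_derive (0 : R) 1
    (fun t => Jclip Aset d Adv thold (1 - eps) (1 + eps) (perturb thk s a t))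
    (Jclip_grad Aset d Adv thold thk (1 - eps) (1 + eps) s a).
  by move=> aA; apply: is_derive_Jclip_perturb => //;
    [lra | apply: wN; rewrite !inE eqxx ?orbT..].
have DeltaE a : a \in Aset s -> Delta a = eta * (Jclip_grad Aset d Adv thold thk ld ud s a
    - Jclip_grad Aset d Adv thold thk (1 - eps) (1 + eps) s a).
  move=> aA; rewrite /Delta /update /partialJ !derive1E.
  by case: (dATR a aA) => _ ->; case: (dRatio a aA) => _ ->; ring.
split; first by move=> a aA; split; [case: (dATR a aA) | case: (dRatio a aA)].
split=> [hu1 I a aA | hl1 I a aA].
- have lt_ld : 1 - eps < ld by apply: (kl3_eq_1D_gt_1B e01 l0); rewrite /kl3 hl hu1 hu.
  have hI : {in Aset s, forall b, (if 1 - eps < w b < 1 + eps then 1 else 0)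
                                  - (if ld < w b < ud then 1 else 0) = I b}.
    move=> b bA; rewrite /I bA -hu1; apply: indicator_ooBl; first lra.
    by apply: (wN _ _ b bA); rewrite !inE eqxx.
  by rewrite DeltaE // -opprB (Jclip_grad_sub d Adv aA hI); ring.
- have gt_ud : 1 + eps < ud by apply: (kl3_eq_1B_gt_1D e01 (ltW u1)); rewrite /kl3 hu hl1 hl.
  have hI : {in Aset s, forall b, (if ld < w b < ud then 1 else 0)
                                  - (if ld < w b < 1 + eps then 1 else 0) = I b}.
    move=> b bA; rewrite /I bA -hl1; apply: indicator_ooBr; first lra.
    by apply: (wN _ _ b bA); rewrite !inE eqxx ?orbT.
  by rewrite DeltaE // hl1 (Jclip_grad_sub d Adv aA hI); ring.
Qed.
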